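(* Consider the remote-attestation Stackelberg game described in the context with a single device $\delta$ (so $\mathcal{D}=\{\delta\}$ and the only device class is $\mathcal{E}=\{\delta\}$) and a single attestation method $m$ (so $\mathcal{M}=\{m\}$). Let the defender's strategy be $p_\delta^m\in[0,1]$ and define $$\tau_\delta=\frac{1}{\mu^m}\cdot\frac{C_A^{\mathcal{E}}+C_A^\delta-G_A^\delta}{L_A^\delta-G_A^\delta}.$$ Then the attacker's best-response set is $$\mathcal{F}(\vec p)=\begin{cases}\{1\}&\text{if } p_\delta^m<\tau_\delta,\\ \{0,1\}&\text{if } p_\delta^m=\tau_\delta,\\ \{0\}&\text{otherwise.}\end{cases}$$
   Context: Remote-attestation game: there is a finite set $\mathcal{D}$ of devices partitioned into pairwise disjoint device classes $\mathcal{E}_1,\dots,\mathcal{E}_n$ (with $\bigcup_i\mathcal{E}_i=\mathcal{D}$), and a finite set $\mathcal{M}$ of attestation methods. Constants: for each method $m$, a detection probability $\mu^m$ (probability that running $m$ on a compromised device detects the compromise) and a defender cost $C_D^m$ of running $m$ on a device; for each device $\delta$, an attacker cost $C_A^\delta$ of attacking $\delta$; for each class $\mathcal{E}$, an attacker cost $C_A^{\mathcal{E}}$ of developing an exploit for $\mathcal{E}$; for each device $\delta$, defender gain $G_D^\delta$ and loss $L_D^\delta$, attacker gain $G_A^\delta$ and loss $L_A^\delta$ (losses are represented as negative values), with $G_D^\delta=-L_A^\delta$ and $L_D^\delta=-G_A^\delta$. The defender (leader) chooses $\vec p=\langle p_\delta^m\rangle\in[0,1]^{|\mathcal{D}\times\mathcal{M}|}$,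 where $p_\delta^m$ is the probability of running method $m$ on device $\delta$; the attacker (follower) chooses $\vec a=\langle a_\delta\rangle\in\{0,1\}^{|\mathcal{D}|}$ ($a_\delta=1$ means attacking $\delta$). Detection probability: $P_\delta(\vec p)=1-\prod_{m\in\mathcal{M}}(1-\mu^m p_\delta^m)$. Defender cost $C_D^T(\vec p)=\sum_{\delta}\sum_m C_D^m p_\delta^m$. Defender utility $U_D(\vec p,\vec a)=\sum_{\delta}[G_D^\delta P_\delta(\vec p)+L_D^\delta(1-P_\delta(\vec p))]a_\delta-C_D^T(\vec p)$. Attacker cost $C_A^T(\vec a)=\sum_{\mathcal{E}}\big(C_A^{\mathcal{E}}\cdot 1_{\{\exists\delta\in\mathcal{E}:a_\delta=1\}}+\sum_{\delta\in\mathcal{E}}C_A^\delta a_\delta\big)$. Attacker utility $U_A(\vec p,\vec a)=\sum_\delta[L_A^\delta P_\delta(\vec p)+G_A^\delta(1-P_\delta(\vec p))]a_\delta-C_A^T(\vec a)$. The attacker's best-response set is $\mathcal{F}(\vec p)=\operatorname{argmax}_{\vec a}U_A(\vec p,\vec a)$. *)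

From HB Require Import structures.
From mathcomp Require Import all_boot all_order all_algebra.
Set Implicit Arguments. Unset Strict Implicit. Unset Printing Implicit Defensive.
Import Order.TTheory GRing.Theory Num.Theory.
Local Open Scope ring_scope.

(* Devices D, methods M, device classes E; [cls d] is the class of device d,
   so the classes {d | cls d = e} are pairwise disjoint and cover D. *)

Definition detP (R : numDomainType) (D M : finType)
  (mu : M -> R) (p : D -> M -> R) (d : D) : R :=
  1 - \prod_(m : M) (1 - mu m * p d m).

Definition att_cost (R : numDomainType) (D E : finType) (cls : D -> E)
  (CE : E -> R) (Cd : D -> R) (a : {ffun D -> bool}) : R :=
  \sum_(e : E) ((if [exists d, (cls d == e) && a d] then CE e else 0)
                + \sum_(d | cls d == e) Cd d * (a d)%:R).

Definition UA (R : numDomainType) (D M E : finType) (mu : M -> R)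
  (LA GA : D -> R) (cls : D -> E) (CE : E -> R) (Cd : D -> R)
  (p : D -> M -> R) (a : {ffun D -> bool}) : R :=
  \sum_(d : D) (LA d * detP mu p d + GA d * (1 - detP mu p d)) * (a d)%:R
  - att_cost cls CE Cd a.

Definition BR (R : numDomainType) (D M E : finType) (mu : M -> R)
  (LA GA : D -> R) (cls : D -> E) (CE : E -> R) (Cd : D -> R)
  (p : D -> M -> R) : {set {ffun D -> bool}} :=
  [set a | [forall b : {ffun D -> bool},
              UA mu LA GA cls CE Cd p b <= UA mu LA GA cls CE Cd p a]].

From HB Require Import structures.
From mathcomp Require Import all_boot all_order all_algebra.
From mathcomp Require Import ring.
Import Order.TTheory GRing.Theory Num.Theory.
Local Open Scope ring_scope.

(* With one device, one method and one class, the attacker only decides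
   whether to attack, and attacking yields
   L_A mu p + G_A (1 - mu p) - C_A^E - C_A^delta = mu (L_A - G_A) (p - tau)
   more than abstaining.  As L_A < 0 <= G_A and mu > 0, the factor
   mu (L_A - G_A) is negative, so attacking is strictly better, indifferent
   or strictly worse according as p < tau, p = tau or p > tau. *)

Lemma big_unit (R : Type) (idx : R) (op : Monoid.law idx) (F : unit -> R) :
  \big[op/idx]_(i : unit) F i = F tt.
Proof. by rewrite (big_pred1 tt) ?Monoid.mulm1 // => -[]. Qed.

Lemma ffun_unitE {T : Type} (f : {ffun unit -> T}) : f = [ffun => f tt].
Proof. by apply/ffunP => -[]; rewrite ffunE. Qed.

Lemma eq_ffun_unit {T : eqType} (x y : T) :
  ([ffun => x] == [ffun => y] :> {ffun unit -> T}) = (x == y).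
Proof. by apply/eqP/eqP => [/ffunP/(_ tt)|->]; rewrite ?ffunE. Qed.

Lemma mem_argmax_binary (R : realDomainType) (u : R)
    (a : {ffun unit -> bool}) :
  [forall b : {ffun unit -> bool}, (b tt)%:R * u <= (a tt)%:R * u] =
  (if a tt then 0 <= u else u <= 0).
Proof.
apply/forallP/idP => [/(_ [ffun => ~~ a tt])|le_au b].
  by rewrite ffunE; case: (a tt); rewrite !(mul0r, mul1r).
by case: (a tt) (b tt) le_au => -[]; rewrite !(mul0r, mul1r).
Qed.

Lemma argmax_binary (R : realDomainType) (u : R) :
  [set a : {ffun unit -> bool} |
     [forall b : {ffun unit -> bool}, (b tt)%:R * u <= (a tt)%:R * u]] =
  if 0 < u then [set [ffun => true]]
  else if u == 0 then [set: {ffun unit -> bool}]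
  else [set [ffun => false]].
Proof.
apply/setP => a; rewrite inE mem_argmax_binary (ffun_unitE a) ffunE.
by case: (a tt); case: ltgtP => _; rewrite ?inE ?eq_ffun_unit.
Qed.

Section SingleDevice.

Context {R : numDomainType}.
Variables (mu LA GA CE Cd : unit -> R) (p : unit -> unit -> R).

Definition attack_payoff : R :=
  LA tt * (mu tt * p tt tt) + GA tt * (1 - mu tt * p tt tt) - (CE tt + Cd tt).

Lemma detP_single : detP mu p tt = mu tt * p tt tt.
Proof. by rewrite /detP big_unit subKr. Qed.

Lemma att_cost_single (a : {ffun unit -> bool}) :
  att_cost (fun _ => tt) CE Cd a = (a tt)%:R * (CE tt + Cd tt).
Proof.
have exists_a : [exists d, (tt == tt) && a d] = a tt.
  by apply/existsP/idP => [[[]]|]; last exists tt.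
rewrite /att_cost big_unit eqxx big_unit exists_a.
by case: (a tt) => /=; ring.
Qed.

Lemma UA_single (a : {ffun unit -> bool}) :
  UA mu LA GA (fun _ => tt) CE Cd p a = (a tt)%:R * attack_payoff.
Proof.
by rewrite /UA big_unit att_cost_single detP_single /attack_payoff; ring.
Qed.

End SingleDevice.

Lemma BR_single (R : realDomainType) (mu LA GA CE Cd : unit -> R)
    (p : unit -> unit -> R) :
  BR mu LA GA (fun _ => tt) CE Cd p =
    let u := attack_payoff mu LA GA CE Cd p in
    if 0 < u then [set [ffun => true]]
    else if u == 0 then [set: {ffun unit -> bool}]
    else [set [ffun => false]].
Proof.
rewrite /= -argmax_binary; apply/setP => a; rewrite !inE.
by apply: eq_forallb => b; rewrite !UA_single.
Qed.

Lemma attack_payoff_factor (R : numFieldType) (mu LA GA CE Cd : unit -> R)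
    (p : unit -> unit -> R) :
  mu tt != 0 -> LA tt != GA tt ->
  attack_payoff mu LA GA CE Cd p =
    mu tt * (LA tt - GA tt) *
    (p tt tt - (mu tt)^-1 * ((CE tt + Cd tt - GA tt) / (LA tt - GA tt))).
Proof.
move=> mu_neq0 LA_neq_GA; rewrite /attack_payoff; field.
by rewrite mu_neq0 subr_eq0 LA_neq_GA.
Qed.

Theorem lemma1 (R : realFieldType) (mu : unit -> R) (LA GA Cd : unit -> R)
  (CE : unit -> R) (p : unit -> unit -> R)
  (Hmu : 0 < mu tt <= 1) (HLA : LA tt < 0) (HGA : 0 <= GA tt)
  (Hp : 0 <= p tt tt <= 1) :
  let tau := (mu tt)^-1 * ((CE tt + Cd tt - GA tt) / (LA tt - GA tt)) in
  BR mu LA GA (fun _ : unit => tt) CE Cd p =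
    if p tt tt < tau then [set [ffun => true]]
    else if p tt tt == tau then [set: {ffun unit -> bool}]
    else [set [ffun => false]].
Proof.
move=> tau; have mu_gt0 : 0 < mu tt by case/andP: Hmu.
have LA_lt_GA : LA tt < GA tt := lt_le_trans HLA HGA.
have slope_lt0 : mu tt * (LA tt - GA tt) < 0 by rewrite pmulr_rlt0 // subr_lt0.
rewrite BR_single /= attack_payoff_factor ?lt0r_neq0 ?(lt_eqF LA_lt_GA) //.
rewrite nmulr_rgt0 // subr_lt0 mulf_eq0 (negbTE (ltr0_neq0 slope_lt0)).
by rewrite subr_eq0.
Qed.
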